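(* Let $\mathbf A$ be a finite subdirectly irreducible cBCK-algebra which is not a chain, let $\mathcal K$ be a cover of $\mathcal V(\mathbf A)$ in the lattice of varieties of cBCK-algebras, and let $\mathbf B$ be a subdirectly irreducible member of $\mathcal K$. Then $|\mathrm{m}(\mathbf B)|\le|\mathrm{m}(\mathbf A)|+1$.
   Context: A BCK-algebra is an algebra $(A,\ominus,0)$ of type $(2,0)$ satisfying $((x\ominus y)\ominus(x\ominus z))\ominus(z\ominus y)=0$, $x\ominus 0=x$, $0\ominus x=0$, and ($x\ominus y=0$ and $y\ominus x=0$ imply $x=y$); it is ordered by $x\le y$ iff $x\ominus y=0$. A cBCK-algebra is a BCK-algebra satisfying $x\ominus(x\ominus y)=y\ominus(y\ominus x)$; cBCK-algebras form a variety. $\mathrm{m}(\mathbf B)$ denotes the set of maximal elements of $\mathbf B$. $\mathcal V(\mathbf A)$ is the variety generated by $\mathbf A$. A cover of a variety $\mathcal V$ is a variety $\mathcal K\supsetneq\mathcal V$ such that no variety lies strictly between $\mathcal V$ and $\mathcal K$. *)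

From mathcomp Require Import all_boot.
Set Implicit Arguments. Unset Strict Implicit. Unset Printing Implicit Defensive.

(* ---------- algebras of type (2,0): carrier T, binary [s] (= ⊖), constant [z] (= 0) ---------- *)

Section Alg.
Variables (T : Type) (s : T -> T -> T) (z : T).

Definition bck_le (x y : T) : Prop := s x y = z.

Definition is_BCK : Prop :=
  (forall x y w, s (s (s x y) (s x w)) (s w y) = z) /\
  (forall x, s x z = x) /\
  (forall x, s z x = z) /\
  (forall x y, s x y = z -> s y x = z -> x = y).

Definition is_cBCK : Prop :=
  is_BCK /\ (forall x y, s x (s x y) = s y (s y x)).

Definition is_chain : Prop := forall x y, bck_le x y \/ bck_le y x.

Definition is_maximal (x : T) : Prop := forall y, bck_le x y -> y = x.

Definition is_congruence (R : T -> T -> Prop) : Prop :=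
  let _ := z in
  (forall x, R x x) /\ (forall x y, R x y -> R y x) /\
  (forall x y w, R x y -> R y w -> R x w) /\
  (forall x x' y y', R x x' -> R y y' -> R (s x y) (s x' y')).

Definition is_identity_rel (R : T -> T -> Prop) : Prop :=
  let _ := (s, z) in forall x y, R x y -> x = y.

Definition subdirectly_irreducible : Prop :=
  let _ := z in
  exists mu, is_congruence mu /\ ~ is_identity_rel mu /\
    forall theta, is_congruence theta -> ~ is_identity_rel theta ->
      forall x y, mu x y -> theta x y.
End Alg.

Inductive term : Type :=
| tVar of nat
| tZero
| tSub of term & term.

Fixpoint eval (T : Type) (s : T -> T -> T) (z : T) (v : nat -> T) (t : term) : T :=
  match t with
  | tVar n => v n
  | tZero => z
  | tSub t1 t2 => s (eval s z v t1) (eval s z v t2)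
  end.

Definition identity := (term * term)%type.

Definition satisfies (T : Type) (s : T -> T -> T) (z : T) (e : identity) : Prop :=
  forall v : nat -> T, eval s z v e.1 = eval s z v e.2.

(* A set of identities, read as the subvariety of the variety of cBCK-algebras
   it axiomatizes (relative to cBCK). Every subvariety of cBCK arises this way. *)
Definition eqset := identity -> Prop.

Definition Mod (S : eqset) (T : Type) (s : T -> T -> T) (z : T) : Prop :=
  is_cBCK s z /\ forall e, S e -> satisfies s z e.

Definition var_incl (S1 S2 : eqset) : Prop :=
  forall (T : Type) (s : T -> T -> T) (z : T), Mod S1 s z -> Mod S2 s z.

Definition var_eq (S1 S2 : eqset) : Prop := var_incl S1 S2 /\ var_incl S2 S1.

(* equational theory of an algebra; Mod (Th A) = V(A), the smallest
   variety (equational class) containing A *)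
Definition Th (T : Type) (s : T -> T -> T) (z : T) : eqset := fun e => satisfies s z e.

Definition is_cover (SV SK : eqset) : Prop :=
  var_incl SV SK /\ ~ var_incl SK SV /\
  forall SW : eqset, var_incl SV SW -> var_incl SW SK -> var_eq SW SV \/ var_eq SW SK.

Definition maxb (A : finType) (s : A -> A -> A) (z : A) (x : A) : bool :=
  [forall y, (s x y == z) ==> (y == x)].

From mathcomp Require Import all_boot.
From Stdlib Require Import Classical ProofIrrelevance.

Set Implicit Arguments. Unset Strict Implicit. Unset Printing Implicit Defensive.

(* In a subdirectly irreducible cBCK-algebra two nonzero elements have a nonzero
   meet: otherwise the ideals they generate would give two nontrivial
   congruences with trivial intersection.  As (x ⊖ y) ∧ (y ⊖ x) = 0 whenever x
   and y have a common upper bound, the elements below any fixed element form a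
   chain.  Hence, for m >= 2, an s.i. algebra satisfies the identity ε_m, "the
   meet of all x_i ⊖ x_j (i ≠ j < m) is 0", iff it has no m-element antichain;
   so A, each of whose elements lies below one of its n maximal elements,
   satisfies ε_(n+1).  If B had n + 2 maximal elements it would fail ε_(n+2), so
   the variety K + ε_(n+2), which lies between V(A) and K, is not K; being
   below a cover, it is V(A).  But the subalgebra of B of the elements below
   n + 1 of those maximal elements lies in K and satisfies ε_(n+2), yet fails
   ε_(n+1), which holds in V(A). *)

Section Subalgebra.
Variables (T : Type) (s : T -> T -> T) (z : T) (P : T -> Prop).
Hypotheses (P_sub : forall x y, P x -> P y -> P (s x y)) (P0 : P z).

Definition sub_op (a b : {x | P x}) : {x | P x} :=
  exist P (s (proj1_sig a) (proj1_sig b)) (P_sub (proj2_sig a) (proj2_sig b)).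

Definition sub_zero : {x | P x} := exist P z P0.

Lemma sub_val_inj (a b : {x | P x}) : proj1_sig a = proj1_sig b -> a = b.
Proof. by case: a b => [a Pa] [b Pb] /= eq_ab; apply: subset_eq_compat. Qed.

Lemma eval_sub v t :
  proj1_sig (eval sub_op sub_zero v t) = eval s z (fun n => proj1_sig (v n)) t.
Proof. by elim: t => //= t1 -> t2 ->. Qed.

Lemma satisfies_sub e : satisfies s z e -> satisfies sub_op sub_zero e.
Proof. by move=> sat_e v; apply: sub_val_inj; rewrite !eval_sub. Qed.

Lemma is_cBCK_sub : is_cBCK s z -> is_cBCK sub_op sub_zero.
Proof.
move=> [[ax1 [subx0 [sub0x le_anti]]] meetC].
split; [split; [|split; [|split]]|].
- by move=> x y w; apply: sub_val_inj; apply: ax1.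
- by move=> x; apply: sub_val_inj; apply: subx0.
- by move=> x; apply: sub_val_inj; apply: sub0x.
- move=> x y /(congr1 (@proj1_sig _ _)) le_xy /(congr1 (@proj1_sig _ _)) le_yx.
  by apply: sub_val_inj; apply: le_anti.
- by move=> x y; apply: sub_val_inj; apply: meetC.
Qed.

Lemma Mod_sub S : Mod S s z -> Mod S sub_op sub_zero.
Proof.
by case=> cBCK_T sat_S; split=> [|e /sat_S]; [apply: is_cBCK_sub | apply: satisfies_sub].
Qed.

End Subalgebra.

Lemma si_congruence_meet (T : Type) (s : T -> T -> T) (z : T) (th1 th2 : T -> T -> Prop) :
  subdirectly_irreducible s z ->
  is_congruence s z th1 -> ~ is_identity_rel s z th1 ->
  is_congruence s z th2 -> ~ is_identity_rel s z th2 ->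
  exists x y, [/\ x <> y, th1 x y & th2 x y].
Proof.
case=> mu [_ [mu_nid mu_least]] cong1 nid1 cong2 nid2.
have [x [y [mu_xy neq_xy]]] : exists x y, mu x y /\ x <> y.
  apply: NNPP => none; apply: mu_nid; rewrite /is_identity_rel /= => x y mu_xy.
  by apply: NNPP => neq_xy; apply: none; exists x, y.
by exists x, y; split; [| apply: mu_least mu_xy | apply: mu_least mu_xy].
Qed.

Definition meet_term (a b : term) : term := tSub a (tSub a b).

Definition distinct_pairs m : seq (nat * nat) :=
  [seq p <- [seq (i, j) | i <- iota 0 m, j <- iota 0 m] | p.1 != p.2].

(* The meet has no neutral element to start from; the seed [x_0 ⊖ x_1] is
   itself one of the meetands as soon as [m >= 2]. *)
Definition antichain_term m : term :=
  foldr (fun p => meet_term (tSub (tVar p.1) (tVar p.2))) (tSub (tVar 0) (tVar 1))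
    (distinct_pairs m).

Definition no_antichain m : identity := (antichain_term m, tZero).

Lemma mem_distinct_pairs m i j : ((i, j) \in distinct_pairs m) = [&& i < m, j < m & i != j].
Proof.
rewrite mem_filter /= andbC; case: (i != j); rewrite ?andbF //= !andbT.
apply/allpairsP/andP => [[[i' j'] [/= i'_in j'_in [-> ->]]] | [lt_im lt_jm]].
  by move: i'_in j'_in; rewrite !mem_iota /= => -> ->.
by exists (i, j); rewrite !mem_iota.
Qed.

Section CBCK.
Variables (T : Type) (s : T -> T -> T) (z : T).

Local Notation "x ⊑ y" := (s x y = z) (at level 70, no associativity).
Local Notation "x ⊓ y" := (s x (s x y)) (at level 40, left associativity).

Definition antichain (v : nat -> T) m := forall i j, i < m -> j < m -> i != j -> ~ v i ⊑ v j.

Lemma antichain_leq v m m' : m <= m' -> antichain v m' -> antichain v m.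
Proof.
move=> le_mm' anti i j lt_i lt_j.
by apply: anti; [apply: leq_trans lt_i le_mm' | apply: leq_trans lt_j le_mm'].
Qed.

Lemma maxima_antichain k (f : 'I_k -> T) :
  injective f -> (forall i, is_maximal s z (f i)) -> antichain (fun i => oapp f z (insub i)) k.
Proof.
move=> f_inj f_max i j lt_ik lt_jk neq_ij.
rewrite (insubT (fun n => n < k) lt_ik) (insubT (fun n => n < k) lt_jk) /= => le_ij.
by move: neq_ij; have /f_inj[->] := f_max _ _ le_ij; rewrite eqxx.
Qed.

Hypothesis cBCK : is_cBCK s z.

Lemma bck_ax1 x y w : s (s x y) (s x w) ⊑ s w y. Proof. by case: cBCK => [[]]. Qed.
Lemma subx0 x : s x z = x. Proof. by case: cBCK => [[_ []]]. Qed.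
Lemma sub0x x : z ⊑ x. Proof. by case: cBCK => [[_ [_ []]]]. Qed.
Lemma le_anti x y : x ⊑ y -> y ⊑ x -> x = y.
Proof. by case: cBCK => [[_ [_ [_ anti]]] _]; apply: anti. Qed.
Lemma meetC x y : x ⊓ y = y ⊓ x. Proof. by case: cBCK. Qed.

Lemma lex0 x : x ⊑ z -> x = z. Proof. by rewrite subx0. Qed.
Lemma lexx x : x ⊑ x. Proof. by have := bck_ax1 x z z; rewrite !subx0. Qed.
Lemma leBl x y : s x y ⊑ x. Proof. by have := bck_ax1 x y z; rewrite !subx0 sub0x subx0. Qed.
Lemma leIr x y : x ⊓ y ⊑ y. Proof. by have := bck_ax1 x z y; rewrite !subx0. Qed.
Lemma leIl x y : x ⊓ y ⊑ x. Proof. exact: leBl. Qed.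

Lemma le_trans x y w : x ⊑ y -> y ⊑ w -> x ⊑ w.
Proof. by move=> le_xy le_yw; have := bck_ax1 x w y; rewrite le_xy le_yw !subx0. Qed.

Lemma leB2l x y w : x ⊑ y -> s w y ⊑ s w x.
Proof. by move=> le_xy; have := bck_ax1 w y x; rewrite le_xy subx0. Qed.

Lemma leB2r x y w : x ⊑ y -> s x w ⊑ s y w.
Proof. by move=> le_xy; have := bck_ax1 x w y; rewrite le_xy subx0. Qed.

Lemma leB_swap x y w : s x y ⊑ w -> s x w ⊑ y.
Proof. by move=> le_xyw; apply: le_trans (leIr x y); apply: leB2l. Qed.

Lemma leBB x y w : s (s x w) (s y w) ⊑ s x y.
Proof. by apply: leB_swap; apply: bck_ax1. Qed.

Lemma subAC x y w : s (s x y) w = s (s x w) y.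
Proof.
have le_AC p q r : s (s p q) r ⊑ s (s p r) q.
  by apply: leB_swap; apply: le_trans (leBB p (s p r) q) (leIr p r).
by apply: le_anti; apply: le_AC.
Qed.

Lemma meet_r x y : y ⊑ x -> x ⊓ y = y.
Proof. by move=> le_yx; rewrite meetC le_yx subx0. Qed.

Lemma lexI x y w : w ⊑ x -> w ⊑ y -> w ⊑ x ⊓ y.
Proof. by move=> le_wx le_wy; have := leB2l x (leB2l x le_wy); rewrite meet_r. Qed.

Lemma common_lb_subC_eq0 e x y u :
  x ⊑ e -> y ⊑ e -> u ⊑ s x y -> u ⊑ s y x -> u = z.
Proof.
move=> le_xe le_ye le_u_xy le_u_yx.
pose j := s e (s e x ⊓ s e y).
have le_xj : x ⊑ j by rewrite -{1}(meet_r le_xe); apply: leB2l; apply: leIl.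
have le_yj : y ⊑ j by rewrite -{1}(meet_r le_ye); apply: leB2l; apply: leIr.
have j_least w : x ⊑ w -> y ⊑ w -> w ⊑ e -> j ⊑ w.
  by move=> le_xw le_yw le_we; rewrite -(meet_r le_we); apply/leB2l/lexI; apply: leB2l.
have le_x_ju : x ⊑ s j u.
  by rewrite -{1}(meet_r le_xj); apply: leB2l; apply: le_trans le_u_yx (leB2r _ le_yj).
have le_y_ju : y ⊑ s j u.
  by rewrite -{1}(meet_r le_yj); apply: leB2l; apply: le_trans le_u_xy (leB2r _ le_xj).
have le_j_ju : j ⊑ s j u by apply: j_least => //; apply: le_trans (leBl _ _) (leBl _ _).
have le_uj : u ⊑ j by apply: le_trans le_u_xy (le_trans (leBl x y) le_xj).
by rewrite meetC le_uj subx0 in le_j_ju.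
Qed.

Definition subit a n x := iter n (s^~ a) x.

Lemma subitAC a n x y : subit a n (s x y) = s (subit a n x) y.
Proof. by elim: n => //= n IH; rewrite /subit /= -!/(subit _ _ _) IH subAC. Qed.

Lemma subit_le a n x y : x ⊑ y -> subit a n x ⊑ subit a n y.
Proof. by move=> le_xy; elim: n => //= n IH; apply: leB2r. Qed.

Definition is_ideal (I : T -> Prop) := I z /\ forall x y, I (s x y) -> I y -> I x.

Definition gen_ideal a x := exists n, subit a n x = z.

Lemma gen_ideal_is_ideal a : is_ideal (gen_ideal a).
Proof.
split=> [|x y [m xy_m] [n y_n]]; first by exists 0.
exists (n + m); rewrite /subit iterD -!/(subit _ _ _).
have le_xy : subit a m x ⊑ y by rewrite -subitAC.
by have := subit_le a n le_xy; rewrite y_n; apply: lex0.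
Qed.

Definition ideal_rel (I : T -> Prop) x y := I (s x y) /\ I (s y x).

Lemma ideal_rel_congruence I : is_ideal I -> is_congruence s z (ideal_rel I).
Proof.
move=> [I0 I_closed].
have I_le x y : x ⊑ y -> I y -> I x by move=> le_xy; apply: I_closed; rewrite le_xy.
have I_trans x y w : ideal_rel I x y -> ideal_rel I y w -> ideal_rel I x w.
  move=> [xy yx] [yw wy]; split.
  - by apply: I_closed xy; apply: I_le yw; apply: bck_ax1.
  - by apply: I_closed wy; apply: I_le yx; apply: bck_ax1.
rewrite /is_congruence /=; split; [|split; [|split]].
- by move=> x; rewrite /ideal_rel lexx.
- by move=> x y [].
- exact: I_trans.
- move=> x x' y y' [xx' x'x] [yy' y'y]; apply: (I_trans _ (s x' y)); split.
  + by apply: I_le xx'; apply: leBB.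
  + by apply: I_le x'x; apply: leBB.
  + by apply: I_le y'y; apply: bck_ax1.
  + by apply: I_le yy'; apply: bck_ax1.
Qed.

Lemma gen_ideal_nontrivial a : a <> z -> ~ is_identity_rel s z (ideal_rel (gen_ideal a)).
Proof.
move=> a_neq0 id_a; apply: a_neq0; apply: id_a; split.
- by rewrite subx0; exists 1; apply: lexx.
- by rewrite sub0x; exists 0.
Qed.

Lemma meet_eq0_gen_ideal w a t : w ⊓ a = z -> gen_ideal a t -> w ⊑ t -> w = z.
Proof.
move=> wa0 [n t_n] le_wt.
have le_w_subit : w ⊑ subit a n w.
  by elim: n {t_n} => [|n IH]; [apply: lexx | apply: le_trans wa0 (leB2r _ IH)].
by have := le_trans le_w_subit (subit_le a n le_wt); rewrite t_n; apply: lex0.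
Qed.

Lemma gen_ideal_disjoint a b t : a ⊓ b = z -> gen_ideal a t -> gen_ideal b t -> t = z.
Proof.
move=> ab0 t_a t_b.
have ta_b0 : t ⊓ a ⊓ b = z.
  have := lexI (le_trans (leIl (t ⊓ a) b) (leIr t a)) (leIr (t ⊓ a) b).
  by rewrite ab0; apply: lex0.
have ta0 : t ⊓ a = z := meet_eq0_gen_ideal ta_b0 t_b (leIl t a).
exact: meet_eq0_gen_ideal ta0 t_a (lexx t).
Qed.

Lemma eval_antichain_term_eq0 v m : ~ antichain v m -> eval s z v (antichain_term m) = z.
Proof.
move=> not_anti; apply: NNPP => eval_neq0; apply: not_anti => i j lt_im lt_jm neq_ij le_ij.
apply: eval_neq0; have : (i, j) \in distinct_pairs m by rewrite mem_distinct_pairs lt_im lt_jm.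
rewrite /antichain_term; elim: (distinct_pairs m) => //= p ps IH.
by rewrite in_cons => /orP [/eqP <- | /IH ->] /=; rewrite ?le_ij ?sub0x ?subx0 ?lexx.
Qed.

Section SubdirectlyIrreducible.
Hypothesis si : subdirectly_irreducible s z.

Lemma si_meet_neq0 a b : a <> z -> b <> z -> a ⊓ b <> z.
Proof.
move=> a_neq0 b_neq0 ab0.
have [x [y [neq_xy [xy_a yx_a] [xy_b yx_b]]]] := si_congruence_meet si
  (ideal_rel_congruence (gen_ideal_is_ideal a)) (gen_ideal_nontrivial a_neq0)
  (ideal_rel_congruence (gen_ideal_is_ideal b)) (gen_ideal_nontrivial b_neq0).
by apply: neq_xy; apply: le_anti; apply: gen_ideal_disjoint ab0 _ _.
Qed.

Lemma si_le_chain e x y : x ⊑ e -> y ⊑ e -> x ⊑ y \/ y ⊑ x.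
Proof.
move=> le_xe le_ye; apply: NNPP => /not_or_and [nle_xy nle_yx].
apply: (si_meet_neq0 nle_xy nle_yx).
exact: common_lb_subC_eq0 le_xe le_ye (leIl _ _) (leIr _ _).
Qed.

Lemma eval_antichain_term_neq0 v m :
  1 < m -> antichain v m -> eval s z v (antichain_term m) <> z.
Proof.
move=> lt1m anti.
have pair_neq0 p : p \in distinct_pairs m -> s (v p.1) (v p.2) <> z.
  by case: p => i j; rewrite mem_distinct_pairs => /and3P [lt_im lt_jm neq_ij]; apply: anti.
rewrite /antichain_term; elim: (distinct_pairs m) pair_neq0 => /= [_ | p ps IH ps_neq0].
  by apply: anti => //; apply: ltnW.
apply: si_meet_neq0; first by apply: ps_neq0; rewrite mem_head.
by apply: IH => q q_in; apply: ps_neq0; rewrite in_cons q_in orbT.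
Qed.

Lemma si_cover_not_antichain (Y : finType) (S : {set Y}) (e : Y -> T) v m :
  #|S| < m -> (forall i, i < m -> exists2 y, y \in S & v i ⊑ e y) -> ~ antichain v m.
Proof.
move=> lt_Sm cover anti.
have [h h_spec] : exists h : 'I_m -> Y, forall i, h i \in S /\ v i ⊑ e (h i).
  apply: (@fin_all_exists 'I_m (fun=> Y) (fun i y => y \in S /\ v i ⊑ e y)) => i.
  by have [y] := cover i (ltn_ord i); exists y.
have h_inj : injective h.
  move=> i j eq_hij; apply/eqP/negPn/negP => neq_ij.
  have le_j_hi : v j ⊑ e (h i) by rewrite eq_hij; apply: (h_spec j).2.
  have [le_ij | le_ji] := si_le_chain (h_spec i).2 le_j_hi.
  - by apply: anti (ltn_ord i) (ltn_ord j) _ le_ij.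
  - by apply: anti (ltn_ord j) (ltn_ord i) _ le_ji; rewrite eq_sym.
have : m <= #|S|.
  rewrite -[m]card_ord -(card_imset _ h_inj); apply: subset_leq_card.
  by apply/subsetP => _ /imsetP [i _ ->]; apply: (h_spec i).1.
by rewrite leqNgt lt_Sm.
Qed.

Section Below.
Variables (v : nat -> T) (m : nat).

Definition below x := exists2 i, i <= m & x ⊑ v i.

Lemma belowB x y : below x -> below y -> below (s x y).
Proof. by move=> [i le_im le_xv] _; exists i => //; apply: le_trans (leBl x y) le_xv. Qed.

Lemma below0 : below z.
Proof. by exists 0 => //; apply: sub0x. Qed.

Local Notation sC := (sub_op belowB).
Local Notation zC := (sub_zero below0).

Lemma below_satisfies_no_antichain m' : m.+1 < m' -> satisfies sC zC (no_antichain m').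
Proof.
move=> lt_m' w; apply: sub_val_inj; rewrite !eval_sub /=.
apply: eval_antichain_term_eq0.
apply: (si_cover_not_antichain (S := [set: 'I_m.+1]) (e := fun i => v i)).
  by rewrite cardsT card_ord.
move=> i _; have [c le_cm le_wc] := proj2_sig (w i).
by exists (Ordinal (le_cm : c < m.+1)); rewrite ?inE.
Qed.

Lemma below_fails_no_antichain :
  0 < m -> antichain v m.+1 -> ~ satisfies sC zC (no_antichain m.+1).
Proof.
move=> m_gt0 anti sat.
have v_below i : below (v (minn i m)) by exists (minn i m); [apply: geq_minr | apply: lexx].
have := congr1 (@proj1_sig _ _) (sat (fun i => exist below _ (v_below i))).
rewrite !eval_sub /=; apply: eval_antichain_term_neq0 => // i j lt_i lt_j.
have minn_id k : k < m.+1 -> minn k m = k by move=> lt_k; apply/minn_idPl.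
by rewrite !minn_id //; apply: anti.
Qed.

End Below.

Lemma si_antichain_subalgebra S v m : Mod S s z -> 0 < m -> antichain v m.+1 ->
  exists (U : Type) (sU : U -> U -> U) (zU : U),
    [/\ Mod S sU zU, satisfies sU zU (no_antichain m.+2) & ~ satisfies sU zU (no_antichain m.+1)].
Proof.
move=> T_S m_gt0 anti; exists {x | below v m x}, (sub_op (@belowB v m)), (sub_zero (below0 v m)).
split; [exact: Mod_sub T_S | exact: below_satisfies_no_antichain |
        exact: below_fails_no_antichain m_gt0 anti].
Qed.

End SubdirectlyIrreducible.
End CBCK.

Section Finite.
Variables (A : finType) (s : A -> A -> A) (z : A).
Hypothesis cBCK : is_cBCK s z.

Lemma exists_maxb_above x : exists2 y, s x y = z & maxb s z y.
Proof.
pose up y := [set w | s y w == z].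
case: (@arg_minnP _ x (fun y => s x y == z) (fun y => #|up y|)); first exact/eqP/(lexx cBCK).
move=> y /eqP le_xy y_min; exists y => //; apply/forallP => w; apply/implyP => /eqP le_yw.
apply/negPn/negP => neq_wy.
have : #|up w| < #|up y|.
  apply: proper_card; apply/properP; split.
    apply/subsetP => t; rewrite /up !inE => /eqP le_wt.
    by apply/eqP; apply: (le_trans cBCK) le_yw le_wt.
  exists y; rewrite /up !inE ?(lexx cBCK) //; apply/negP => /eqP le_wy.
  by apply: (negP neq_wy); apply/eqP; apply: (le_anti cBCK).
by rewrite ltnNge y_min // (le_trans cBCK le_xy le_yw).
Qed.

Lemma card_maxb_gt0 : 0 < #|[set x | maxb s z x]|.
Proof. by have [y _ y_max] := exists_maxb_above z; apply/card_gt0P; exists y; rewrite inE. Qed.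

Lemma fin_si_satisfies_no_antichain m : subdirectly_irreducible s z ->
  #|[set x | maxb s z x]| < m -> satisfies s z (no_antichain m).
Proof.
move=> si lt_m v; apply: (eval_antichain_term_eq0 cBCK).
apply: (si_cover_not_antichain cBCK si (e := id) lt_m) => i _.
by have [y le_y y_max] := exists_maxb_above (v i); exists y; rewrite ?inE.
Qed.

End Finite.

Lemma cover_add_identity SV SK e : is_cover SV SK -> SV e ->
  (forall T (s : T -> T -> T) z, Mod SK s z -> satisfies s z e -> Mod SV s z) \/
  (forall T (s : T -> T -> T) z, Mod SK s z -> satisfies s z e).
Proof.
case=> le_VK [_ between] SV_e; pose SKe : eqset := fun d => SK d \/ d = e.
have le_V_Ke : var_incl SV SKe.
  move=> T s z V_T; have [cBCK_T sat_K] := le_VK _ _ _ V_T.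
  by split=> // d [/sat_K | ->] //; apply: V_T.2.
have le_Ke_K : var_incl SKe SK by move=> T s z [cBCK_T sat]; split=> // d K_d; apply: sat; left.
case: (between _ le_V_Ke le_Ke_K) => [[to_V _] | [_ to_Ke]]; [left | right].
  by move=> T s z [cBCK_T sat_K] sat_e; apply: to_V; split=> // d [/sat_K | ->].
by move=> T s z K_T; have [_ sat] := to_Ke _ _ _ K_T; apply: sat; right.
Qed.

Theorem mainTheorem7
  (A : finType) (sA : A -> A -> A) (zA : A)
  (hA : is_cBCK sA zA) (hAsi : subdirectly_irreducible sA zA)
  (hAnc : ~ is_chain sA zA)
  (SK : eqset) (hK : is_cover (Th sA zA) SK)
  (B : Type) (sB : B -> B -> B) (zB : B)
  (hB : Mod SK sB zB) (hBsi : subdirectly_irreducible sB zB) :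
  forall (k : nat) (f : 'I_k -> B), injective f -> (forall i, is_maximal sB zB (f i)) ->
    k <= #|[set x : A | maxb sA zA x]|.+1.
Proof.
move=> k f f_inj f_max; rewrite leqNgt; apply/negP => lt_n1_k.
set n := #|_| in lt_n1_k.
have [cBCK_B _] := hB.
have A_sat m : n < m -> Th sA zA (no_antichain m) := fin_si_satisfies_no_antichain hA hAsi.
have v_anti : antichain sB zB (fun i => oapp f zB (insub i)) n.+2.
  exact: antichain_leq lt_n1_k (maxima_antichain f_inj f_max).
case: (cover_add_identity hK (A_sat _ (leqnSn _))) => [to_VA | K_sat].
  have [C [sC [zC [C_K C_sat C_fail]]]] := si_antichain_subalgebra cBCK_B hBsi hB
    (card_maxb_gt0 hA) (antichain_leq (leqnSn _) v_anti).
  by apply: C_fail; apply: (to_VA _ _ _ C_K C_sat).2; apply: A_sat.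
apply: (eval_antichain_term_neq0 cBCK_B hBsi _ v_anti) => //; exact: (K_sat _ _ _ hB).
Qed.
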